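(* Let $K\ge2$, $0<q<p$ with $p+(K-1)q=1$. Each of the maps $\phi\mapsto\mathrm{Inv}(\phi)$, $\phi\mapsto\mathrm{InvP}(\phi)$, $\phi\mapsto\mathrm{InvN}(\phi)$, $\phi\mapsto\mathrm{MLE}^*(\phi)$, defined on $\Delta$ with values in $\mathbb{R}^K$, is continuous.
   Context: $\Delta=\{\theta\in\mathbb{R}^K:\theta_i\ge0,\sum_i\theta_i=1\}$. $\mathrm{Inv}(\phi)_i=\frac{\phi_i-q}{p-q}$; $\mathrm{InvN}(\phi)_i=\frac{\max(0,\mathrm{Inv}(\phi)_i)}{\sum_j\max(0,\mathrm{Inv}(\phi)_j)}$; $\mathrm{InvP}(\phi)=\arg\min_{\theta\in\Delta}\|\theta-\mathrm{Inv}(\phi)\|_2$. $\mathrm{MLE}^*(\phi)$: for real $\tau$ let $m(\tau)=|\{i:\phi_i<\tau\}|$, $c_\tau=\frac{1-m(\tau)q}{\sum_{i:\phi_i\ge\tau}\phi_i}$; let $\tau^*$ be the smallest $\tau\in\{\phi_1,\dots,\phi_K\}$ with $c_\tau\phi_i\ge q$ for all $i$ with $\phi_i\ge\tau$; $\mathrm{MLE}^*(\phi)_i=0$ if $\phi_i<\tau^*$ and $\frac{c_{\tau^*}\phi_i-q}{p-q}$ otherwise. *)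

From HB Require Import structures.
From mathcomp Require Import all_boot all_order all_algebra.
From mathcomp Require Import all_classical all_reals all_analysis.
Set Implicit Arguments. Unset Strict Implicit. Unset Printing Implicit Defensive.
Import Order.TTheory GRing.Theory Num.Theory.
Import numFieldNormedType.Exports.
Local Open Scope ring_scope.
Local Open Scope classical_set_scope.

Section Defs.
Variables (R : realType) (K : nat).
Implicit Types (phi theta : 'rV[R]_K).

Definition Delta : set 'rV[R]_K :=
  [set theta | (forall i, 0 <= theta ord0 i) /\ \sum_i theta ord0 i = 1].

Variables (p q : R).

Definition Invmap phi : 'rV[R]_K := \row_i ((phi ord0 i - q) / (p - q)).

Definition InvNmap phi : 'rV[R]_K :=
  \row_i (Num.max 0 (Invmap phi ord0 i) / \sum_j Num.max 0 (Invmap phi ord0 j)).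

(* squared Euclidean distance (same minimizers as the l2 distance) *)
Definition sqdist (u v : 'rV[R]_K) : R := \sum_i (u ord0 i - v ord0 i) ^+ 2.

Definition InvPmap phi : 'rV[R]_K :=
  xget 0 [set theta | Delta theta /\
           forall eta, Delta eta -> sqdist theta (Invmap phi) <= sqdist eta (Invmap phi)].

Definition mcount phi (tau : R) : nat := #|[set i : 'I_K | phi ord0 i < tau]|.

Definition ctau phi (tau : R) : R :=
  (1 - (mcount phi tau)%:R * q) / \sum_(i | tau <= phi ord0 i) phi ord0 i.

Definition tau_ok phi (tau : R) : Prop :=
  (exists i, tau = phi ord0 i) /\
  (forall i, tau <= phi ord0 i -> q <= ctau phi tau * phi ord0 i).

Definition tau_star phi : R :=
  xget 0 [set tau | tau_ok phi tau /\ forall tau', tau_ok phi tau' -> tau <= tau'].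

Definition MLEstar phi : 'rV[R]_K :=
  \row_i (if phi ord0 i < tau_star phi then 0
          else (ctau phi (tau_star phi) * phi ord0 i - q) / (p - q)).
End Defs.

(* Inv is affine, and InvP is Inv followed by the Euclidean projection onto the
   compact convex set Delta, which does not increase distances because of the
   variational inequality <v - P v, eta - P v> <= 0.  On Delta the coordinates of
   Inv sum to 1, so the normaliser of InvN is at least 1 and may be replaced by
   max(1, .), which gives a map continuous everywhere.

   For MLE*, put g(T) = (sum_(i in T) phi_i) / (p - q + |T| q) for T a set of
   coordinates; then c_tau = 1 / g({i | tau <= phi_i}).  Minimality of tau* shows
   that c = c_tau* separates the coordinates: c phi_i >= q exactly when
   phi_i >= tau*.  Hence sum_i max(0, c phi_i - q) = p - q, and as no partial sum
   sum_(i in T) (c phi_i - q) exceeds it, 1 / c = max_T g(T).  So on Delta,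
   MLE*(phi)_i = max(0, phi_i / max_T g(T) - q) / (p - q), which is continuous. *)

From Pilot Require Import Defs.
From HB Require Import structures.
From mathcomp Require Import all_boot all_order all_algebra.
From mathcomp Require Import all_classical all_reals all_analysis.
From mathcomp Require Import ring lra.
Import Order.TTheory GRing.Theory Num.Theory.
Import numFieldNormedType.Exports.
Local Open Scope ring_scope.
Local Open Scope classical_set_scope.

Section RealContinuity.
Context {T : topologicalType} {R : realType}.

Lemma continuous_sumr (I : Type) (r : seq I) (P : pred I) (F : I -> T -> R) :
  (forall i, P i -> continuous (F i)) ->
  continuous (fun x => \sum_(i <- r | P i) F i x).
Proof. by apply: continuous_big; exact: add_continuous. Qed.

Lemma continuous_bigmaxr (I : Type) (r : seq I) (x0 : R) (F : I -> T -> R) :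
  (forall i, continuous (F i)) ->
  continuous (fun x => \big[Num.max/x0]_(i <- r) F i x).
Proof.
move=> F_cont; apply: continuous_big => [z|i _]; last exact: F_cont.
by apply: continuous_max; [exact: cvg_fst | exact: cvg_snd].
Qed.

Lemma continuous_subr {f g : T -> R} :
  continuous f -> continuous g -> continuous (fun x => f x - g x).
Proof. by move=> f_cont g_cont x; apply: cvgB; [exact: f_cont | exact: g_cont]. Qed.

Lemma continuous_mulr {f g : T -> R} :
  continuous f -> continuous g -> continuous (fun x => f x * g x).
Proof. by move=> f_cont g_cont x; apply: cvgM; [exact: f_cont | exact: g_cont]. Qed.

Lemma continuous_maxr {f g : T -> R} :
  continuous f -> continuous g -> continuous (fun x => Num.max (f x) (g x)).
Proof. by move=> f_cont g_cont x; exact: (continuous_max (f_cont x) (g_cont x)). Qed.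

Lemma continuous_max1V (f : T -> R) :
  continuous f -> continuous (fun x => (Num.max 1 (f x))^-1).
Proof.
move=> f_cont x; have g_cont := continuous_maxr (@cst_continuous T R 1) f_cont.
by apply: cvgV (g_cont x); rewrite gt_eqF // lt_max ltr01.
Qed.

Lemma continuous_rV n (f : T -> 'rV[R]_n) :
  (forall j, continuous (fun x => f x ord0 j)) -> continuous f.
Proof.
move=> f_cont x; apply/cvg_ballP => e e0.
have : \forall y \near x, forall j, ball (f x ord0 j) e (f y ord0 j).
  by apply: filter_forall => j; exact: (cvg_ball (f_cont j x)).
by apply: filterS => y fy; split=> // i j; rewrite [i]ord1; exact: fy.
Qed.

End RealContinuity.

Lemma continuous_within_eq {T U : topologicalType} (A : set T) (f g : T -> U) :
  {in A, f =1 g} -> continuous g -> {within A, continuous f}.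
Proof.
move=> fg g_cont; apply: (@subspace_eq_continuous _ A _ g f).
  by move=> x Ax; rewrite fg.
exact: continuous_subspaceT.
Qed.

Lemma ge0_of_ge0_perturbed {R : realFieldType} (a b : R) :
  0 <= b -> (forall t, 0 < t <= 1 -> 0 <= a + t * b) -> 0 <= a.
Proof.
move=> b0 hab; rewrite leNgt; apply/negP => a0.
have ba : 0 < b - a by lra.
have t_range : 0 < - a / (b - a) <= 1.
  by rewrite divr_gt0 ?oppr_gt0 //= ler_pdivrMr // mul1r; lra.
have := hab _ t_range.
(* at [t = -a / (b - a)] the perturbed value is [-a^2 / (b - a) < 0] *)
have -> : a + - a / (b - a) * b = - (a ^+ 2 / (b - a)) by field; rewrite gt_eqF.
have a2 : 0 < a ^+ 2 by rewrite expr2; nra.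
by rewrite oppr_ge0 leNgt divr_gt0.
Qed.

Lemma sum_le_sum_ge0 {R : realDomainType} {I : finType} (x : I -> R) (T : {set I}) :
  \sum_(i in T) x i <= \sum_(i | 0 <= x i) x i.
Proof.
rewrite [X in _ <= X]big_mkcond [X in X <= _]big_mkcond /=.
by apply: ler_sum => i _; case: (i \in T); case: (leP 0 (x i)) => // /ltW.
Qed.

Section Simplex.
Context {R : realType} {K : nat}.

Lemma Delta_closed : closed (@Delta R K).
Proof.
have -> : @Delta R K =
    (\bigcap_(i in setT) ((fun th : 'rV[R]_K => th ord0 i) @^-1` [set x | 0 <= x]))
    `&` ((fun th : 'rV[R]_K => \sum_i th ord0 i) @^-1` [set 1]).
  apply/seteqP; split => th.
    by move=> [th_ge0 th_sum]; split => //= i _; exact: th_ge0.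
  by move=> [/= th_ge0 th_sum]; split => // i; exact: th_ge0.
apply: closedI.
  apply: closed_bigI => i _; apply: preimage_closed; last exact: closed_ge.
  by move=> x _; exact: coord_continuous.
apply: preimage_closed; last exact: closed_eq.
by move=> x _; apply: continuous_sumr => i _; exact: coord_continuous.
Qed.

Lemma Delta_le1 (th : 'rV[R]_K) i : Delta th -> th ord0 i <= 1.
Proof.
by move=> [th_ge0 <-]; rewrite (bigD1 i) //= lerDl sumr_ge0.
Qed.

Lemma Delta_compact : compact (@Delta R K).
Proof.
apply: (@subclosed_compact _ _
  [set v : 'rV[R]_K | forall i, `[(0:R), 1]%classic (v ord0 i)] Delta_closed).
  exact: (@rV_compact _ K (fun=> `[(0:R), 1]%classic) (fun=> @segment_compact R 0 1)).
move=> th Dth i /=; rewrite in_itv /= Delta_le1 // andbT; exact: Dth.1.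
Qed.

Lemma Delta_neq0 : (0 < K)%N -> (@Delta R K) !=set0.
Proof.
move=> K0; exists (\row_i K%:R^-1); split => [i|]; first by rewrite mxE invr_ge0.
under eq_bigr => i _ do rewrite mxE.
by rewrite sumr_const card_ord -[_ *+ K]mulr_natr mulVf // pnatr_eq0 -lt0n.
Qed.

Lemma Delta_convex (a b : 'rV[R]_K) t :
  Delta a -> Delta b -> 0 <= t <= 1 -> Delta (a + t *: (b - a)).
Proof.
move=> [a_ge0 a_sum] [b_ge0 b_sum] /andP[t0 t1]; split => [i|].
  rewrite !mxE; have := a_ge0 i; have := b_ge0 i; nra.
under eq_bigr => i _ do rewrite !mxE.
by rewrite big_split /= -mulr_sumr sumrB a_sum b_sum subrr mulr0 addr0.
Qed.

End Simplex.

Section Projection.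
Context {R : realType} {K : nat}.
Variable A : set 'rV[R]_K.

Definition is_proj (v a : 'rV[R]_K) : Prop :=
  A a /\ forall eta, A eta -> sqdist a v <= sqdist eta v.

Lemma sqdist_coord_le (u v : 'rV[R]_K) i : (u ord0 i - v ord0 i) ^+ 2 <= sqdist u v.
Proof. by rewrite /sqdist (bigD1 i) //= lerDl sumr_ge0 // => j _; exact: sqr_ge0. Qed.

Lemma sqdistxx (v : 'rV[R]_K) : sqdist v v = 0.
Proof. by rewrite /sqdist big1 // => i _; rewrite subrr expr0n. Qed.

Lemma continuous_sqdistl (v : 'rV[R]_K) : continuous (fun u => sqdist u v).
Proof.
apply: continuous_sumr => i _; under eq_fun do rewrite expr2.
have coord_v : continuous (fun u : 'rV[R]_K => u ord0 i - v ord0 i).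
  by apply: continuous_subr; [exact: coord_continuous | exact: cst_continuous].
exact: (continuous_mulr coord_v coord_v).
Qed.

Lemma sqdist_le_continuous (f : 'rV[R]_K -> 'rV[R]_K) :
  (forall u w, sqdist (f u) (f w) <= sqdist u w) -> continuous f.
Proof.
move=> f_le; apply: continuous_rV => i x; apply/(@cvgrPdist_lt _ _ _ (nbhs x)) => e e0.
have : \forall y \near x, sqdist y x < e ^+ 2.
  have /cvgrPdist_lt/(_ _ (exprn_gt0 2 e0)) := continuous_sqdistl x x.
  rewrite sqdistxx; apply: filterS => y; rewrite sub0r normrN.
  exact: le_lt_trans (ler_norm _).
apply: filterS => y yx; rewrite distrC -ltr_sqr ?nnegrE ?(ltW e0) // real_normK ?num_real //.
exact: le_lt_trans (le_trans (sqdist_coord_le _ _ i) (f_le y x)) yx.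
Qed.

Lemma proj_exists v : A !=set0 -> compact A -> exists a, is_proj v a.
Proof.
move=> A0 A_compact.
have [a Aa a_min] := EVT_min_rV A0 A_compact (continuous_subspaceT (continuous_sqdistl v)).
exists a; split; first by rewrite -inE.
by move=> eta Aeta; apply: a_min; rewrite inE.
Qed.

Hypothesis A_convex : forall a b t, A a -> A b -> 0 <= t <= 1 -> A (a + t *: (b - a)).

Lemma is_proj_variational {v a eta} : is_proj v a -> A eta ->
  \sum_i (v ord0 i - a ord0 i) * (eta ord0 i - a ord0 i) <= 0.
Proof.
move=> [Aa a_min] Aeta.
set X := \sum_i (a ord0 i - v ord0 i) * (eta ord0 i - a ord0 i).
set Y := \sum_i (eta ord0 i - a ord0 i) ^+ 2.
have sqdist_step t : sqdist (a + t *: (eta - a)) v = sqdist a v + t * (2 * X + t * Y).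
  rewrite /sqdist /X /Y !mulr_sumr -big_split /= mulr_sumr -big_split /=.
  by apply: eq_bigr => i _; rewrite !mxE; ring.
have : 0 <= X.
  apply: (ge0_of_ge0_perturbed _ (Y / 2)).
    by rewrite divr_ge0 // sumr_ge0 // => i _; exact: sqr_ge0.
  move=> t /andP[t0 t1]; have t01 : 0 <= t <= 1 by rewrite ltW.
  have := a_min _ (A_convex a eta t Aa Aeta t01).
  rewrite sqdist_step lerDl pmulr_rge0 //; lra.
have -> : \sum_i (v ord0 i - a ord0 i) * (eta ord0 i - a ord0 i) = - X.
  by rewrite /X -sumrN; apply: eq_bigr => i _; ring.
by rewrite oppr_le0.
Qed.

Lemma is_proj_sqdist_le {u w a b} : is_proj u a -> is_proj w b -> sqdist a b <= sqdist u w.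
Proof.
move=> pa pb.
have := is_proj_variational pa pb.1; have := is_proj_variational pb pa.1.
rewrite /sqdist; set Pa := \sum_i _; set Pb := \sum_i _ => Pb_le0 Pa_le0.
suff : \sum_i (a ord0 i - b ord0 i) ^+ 2 <=
       \sum_i (u ord0 i - w ord0 i) ^+ 2 + 2 * (Pa + Pb) by lra.
rewrite /Pa /Pb -big_split /= mulr_sumr -big_split /=; apply: ler_sum => i _.
have := sqr_ge0 (b ord0 i - a ord0 i - (w ord0 i - u ord0 i)); nra.
Qed.

End Projection.

Section ProjectionDelta.
Context {R : realType} {K : nat}.

Definition proj_Delta (v : 'rV[R]_K) : 'rV[R]_K := xget 0 [set a | is_proj (@Delta R K) v a].

Hypothesis K_gt0 : (0 < K)%N.

Lemma proj_DeltaP v : is_proj (@Delta R K) v (proj_Delta v).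
Proof.
have [a pa] := proj_exists (@Delta R K) v (Delta_neq0 K_gt0) (@Delta_compact R K).
exact: (xgetPex 0 (ex_intro _ a pa)).
Qed.

Lemma proj_Delta_sqdist_le u w : sqdist (proj_Delta u) (proj_Delta w) <= sqdist u w.
Proof. by apply: (is_proj_sqdist_le _ (@Delta_convex R K)); exact: proj_DeltaP. Qed.

Lemma continuous_proj_Delta : continuous proj_Delta.
Proof. exact: sqdist_le_continuous proj_Delta_sqdist_le. Qed.

End ProjectionDelta.

Section Estimators.
Context {R : realType} {K : nat}.
Variables p q : R.

Lemma continuous_Invmap_coord i :
  continuous (fun phi : 'rV[R]_K => Invmap p q phi ord0 i).
Proof.
under eq_fun do rewrite mxE.
apply: continuous_mulr; last exact: cst_continuous.
by apply: continuous_subr; [exact: coord_continuous | exact: cst_continuous].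
Qed.

Lemma continuous_Invmap : continuous (Invmap p q : 'rV[R]_K -> 'rV[R]_K).
Proof. exact: continuous_rV continuous_Invmap_coord. Qed.

Definition InvN_ext (phi : 'rV[R]_K) : 'rV[R]_K :=
  \row_i (Num.max 0 (Invmap p q phi ord0 i) *
          (Num.max 1 (\sum_j Num.max 0 (Invmap p q phi ord0 j)))^-1).

Lemma continuous_InvN_ext : continuous InvN_ext.
Proof.
apply: continuous_rV => i; under eq_fun do rewrite mxE.
apply: continuous_mulr.
  by apply: continuous_maxr; [exact: cst_continuous | exact: continuous_Invmap_coord].
apply: continuous_max1V; apply: continuous_sumr => j _.
by apply: continuous_maxr; [exact: cst_continuous | exact: continuous_Invmap_coord].
Qed.

Definition mass_ratio (phi : 'rV[R]_K) (T : {set 'I_K}) : R :=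
  (\sum_(i in T) phi ord0 i) / (p - q + #|T|%:R * q).

Definition mle_scale (phi : 'rV[R]_K) : R :=
  \big[Num.max/0]_(T : {set 'I_K}) mass_ratio phi T.

Definition MLE_ext (phi : 'rV[R]_K) : 'rV[R]_K :=
  \row_i (Num.max 0 (phi ord0 i * (Num.max 1 (mle_scale phi))^-1 - q) / (p - q)).

Lemma continuous_mle_scale : continuous mle_scale.
Proof.
apply: continuous_bigmaxr => T; apply: continuous_mulr; last exact: cst_continuous.
by apply: continuous_sumr => i _; exact: coord_continuous.
Qed.

Lemma continuous_MLE_ext : continuous MLE_ext.
Proof.
apply: continuous_rV => i; under eq_fun do rewrite mxE.
apply: continuous_mulr; last exact: cst_continuous.
apply: continuous_maxr; first exact: cst_continuous.
apply: continuous_subr; last exact: cst_continuous.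
apply: continuous_mulr; first exact: coord_continuous.
exact: continuous_max1V continuous_mle_scale.
Qed.

Hypotheses (K_gt0 : (0 < K)%N) (q_gt0 : 0 < q) (q_lt_p : q < p)
  (pqK : p + (K - 1)%N%:R * q = 1).

Lemma pq_sum_eq1 : p - q + K%:R * q = 1.
Proof. by move: pqK; rewrite natrB // mulrBl mul1r; lra. Qed.

Lemma continuous_InvPmap : continuous (InvPmap p q : 'rV[R]_K -> 'rV[R]_K).
Proof.
have -> : InvPmap p q = proj_Delta \o Invmap p q by [].
move=> phi; apply: continuous_comp; first exact: continuous_Invmap.
exact: continuous_proj_Delta.
Qed.

Lemma sum_Invmap (phi : 'rV[R]_K) : Delta phi -> \sum_j Invmap p q phi ord0 j = 1.
Proof.
move=> [_ phi_sum]; under eq_bigr => j _ do rewrite mxE.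
rewrite -mulr_suml sumrB phi_sum sumr_const card_ord -mulr_natl.
have -> : 1 - K%:R * q = p - q by have := pq_sum_eq1; lra.
by rewrite mulfV // subr_eq0 gt_eqF.
Qed.

Lemma InvNmap_Delta : {in @Delta R K, InvNmap p q =1 InvN_ext}.
Proof.
move=> phi; rewrite inE => Dphi; apply/rowP => i; rewrite !mxE.
suff -> : Num.max 1 (\sum_j Num.max 0 (Invmap p q phi ord0 j)) =
          \sum_j Num.max 0 (Invmap p q phi ord0 j) by [].
apply/max_idPr; rewrite -(sum_Invmap phi Dphi).
by apply: ler_sum => j _; rewrite le_max lexx orbT.
Qed.

Lemma mass_den_gt0 (T : {set 'I_K}) : 0 < p - q + #|T|%:R * q.
Proof. by apply: ltr_wpDr; [rewrite mulr_ge0 // ltW | rewrite subr_gt0]. Qed.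

Lemma mle_scale_max phi T0 :
  0 < mass_ratio phi T0 ->
  (forall i, (q <= (mass_ratio phi T0)^-1 * phi ord0 i) = (i \in T0)) ->
  mle_scale phi = mass_ratio phi T0.
Proof.
set c := _^-1 => g0 sep.
apply/le_anti; rewrite le_bigmax andbT.
apply: bigmax_le => [|T _]; first exact: ltW.
have c0 : 0 < c by rewrite invr_gt0.
have S0 : 0 < \sum_(i in T0) phi ord0 i.
  by move: g0; rewrite /mass_ratio pmulr_lgt0 // invr_gt0 mass_den_gt0.
have cS : c * \sum_(i in T0) phi ord0 i = p - q + #|T0|%:R * q.
  by rewrite /c invf_div divfK // lt0r_neq0.
have : \sum_(i in T) (c * phi ord0 i - q) <= p - q.
  apply: le_trans (sum_le_sum_ge0 _ _) _.
  rewrite (eq_bigl (mem T0)) => [|i]; last by rewrite /= subr_ge0 sep.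
  by rewrite sumrB -mulr_sumr cS sumr_const -[q *+ _]mulr_natl addrK.
rewrite sumrB -mulr_sumr sumr_const -[q *+ _]mulr_natl => cT.
rewrite -[mass_ratio phi T0]invrK -/c /mass_ratio ler_pdivrMr ?mass_den_gt0 //.
by rewrite -(ler_pM2l c0) mulrA mulfV ?gt_eqF // mul1r; lra.
Qed.

Section Threshold.
Variable phi : 'rV[R]_K.
Hypothesis Dphi : Delta phi.

Definition upper (tau : R) : {set 'I_K} := [set i | tau <= phi ord0 i]%SET.

(* [mcount] counts a classical set (Defs opens classical_set_scope last), whence
   [asboolb]. *)
Lemma mcountE tau : mcount phi tau = #|~: upper tau|.
Proof. by apply: eq_card => i; rewrite unfold_in /= asboolb !inE -ltNge. Qed.

Lemma ctauE tau : ctau q phi tau = (mass_ratio phi (upper tau))^-1.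
Proof.
rewrite /ctau /mass_ratio invf_div; congr (_ / _).
  have := cardsC (upper tau); rewrite card_ord -mcountE => /(congr1 (fun n => n%:R : R)).
  rewrite natrD => k_m; have := pq_sum_eq1; rewrite -k_m; lra.
by apply: eq_bigl => i; rewrite inE.
Qed.

Lemma mass_ratio_ge0 T : 0 <= mass_ratio phi T.
Proof.
rewrite divr_ge0 ?sumr_ge0 // => [i _|]; first exact: Dphi.1.
exact/ltW/mass_den_gt0.
Qed.

Lemma ctau_gt0 {tau} : tau_ok q phi tau -> 0 < ctau q phi tau.
Proof.
move=> [[i ->] ok]; have := ok i (lexx _); rewrite lt_def ctauE invr_ge0 mass_ratio_ge0 andbT.
by apply: contraTN => /eqP ->; rewrite mul0r -ltNge.
Qed.

Lemma upper_sum_gt0 {tau} : 0 < ctau q phi tau -> 0 < \sum_(i in upper tau) phi ord0 i.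
Proof.
by rewrite ctauE invr_gt0 /mass_ratio pmulr_lgt0 // invr_gt0 mass_den_gt0.
Qed.

Lemma ctau_ltE tau x : 0 < \sum_(i in upper tau) phi ord0 i ->
  (ctau q phi tau * x < q) = ((p - q) * x < q * \sum_(i in upper tau) (phi ord0 i - x)).
Proof.
move=> S0; rewrite ctauE /mass_ratio invf_div mulrAC ltr_pdivrMr //.
rewrite sumrB sumr_const -[x *+ _]mulr_natl.
by apply/idP/idP; lra.
Qed.

Lemma upper_sum_le {tau tau'} : tau' <= tau ->
  \sum_(i in upper tau) phi ord0 i <= \sum_(i in upper tau') phi ord0 i.
Proof.
move=> le_tau; rewrite [X in _ <= X]big_mkcond [X in X <= _]big_mkcond /=.
apply: ler_sum => i _; rewrite !inE.
case: (leP tau (phi ord0 i)) => [/(le_trans le_tau) -> // | _].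
by case: ifP => // _; exact: Dphi.1.
Qed.

Lemma upper_excess_eq {tau tau'} : tau' <= tau ->
  (forall i, tau' <= phi ord0 i < tau -> phi ord0 i = tau') ->
  \sum_(i in upper tau') (phi ord0 i - tau') = \sum_(i in upper tau) (phi ord0 i - tau').
Proof.
move=> le_tau gap; rewrite big_mkcond [RHS]big_mkcond /=; apply: eq_bigr => i _.
rewrite !inE; case: (leP tau (phi ord0 i)) => [/(le_trans le_tau) -> // | lt_tau].
by case: ifP => // le_tau'; rewrite gap ?subrr ?le_tau' ?lt_tau.
Qed.

Lemma tau_ok_max i0 : (forall j, phi ord0 j <= phi ord0 i0) -> tau_ok q phi (phi ord0 i0).
Proof.
move=> i0_max; split=> [|i le_i]; first by exists i0.
have -> : phi ord0 i = phi ord0 i0 by apply/le_anti; rewrite le_i i0_max.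
have max_gt0 : 0 < phi ord0 i0.
  have : \sum_j phi ord0 j <= \sum_(j < K) phi ord0 i0 by exact: ler_sum.
  rewrite Dphi.2 sumr_const card_ord -mulr_natr => le1.
  by rewrite lt_def Dphi.1 andbT; apply: contraTN le1 => /eqP ->; rewrite mul0r -ltNge.
have S0 : 0 < \sum_(j in upper (phi ord0 i0)) phi ord0 j.
  rewrite (bigD1 i0) ?inE //= ltr_wpDr // sumr_ge0 // => j _; exact: Dphi.1.
rewrite leNgt ctau_ltE // big1 ?mulr0 => [|j]; last first.
  by rewrite inE => le_j; apply/eqP; rewrite subr_eq0 eq_le le_j i0_max.
by rewrite -leNgt mulr_ge0 ?subr_ge0 ?ltW.
Qed.

Lemma tau_starP : tau_ok q phi (tau_star q phi) /\
  forall tau, tau_ok q phi tau -> tau_star q phi <= tau.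
Proof.
case: (@arg_maxP _ _ _ (Ordinal K_gt0) xpredT (fun j => phi ord0 j) isT) => i0 _ i0_max.
have ok_i0 := tau_ok_max i0 (fun j => i0_max j isT).
pose ok_coord j := `[< tau_ok q phi (phi ord0 j) >].
case: (@arg_minP _ _ _ i0 ok_coord (fun j => phi ord0 j) (asboolT ok_i0)).
move=> j /asboolP ok_j j_min.
suff : exists t, tau_ok q phi t /\ forall tau, tau_ok q phi tau -> t <= tau.
  by move/(xgetPex 0).
exists (phi ord0 j); split=> // tau ok_tau; have [[k tau_k] _] := ok_tau.
by rewrite tau_k; apply/j_min/asboolP; rewrite -tau_k.
Qed.

Lemma tau_star_below i :
  phi ord0 i < tau_star q phi -> ctau q phi (tau_star q phi) * phi ord0 i < q.
Proof.
set tau := tau_star q phi => lt_i; have [ok_tau tau_min] := tau_starP.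
have c_gt0 := ctau_gt0 ok_tau.
case: (@arg_maxP _ _ _ i (fun k => phi ord0 k < tau) (fun k => phi ord0 k) lt_i).
move=> j lt_j j_max; set tau' := phi ord0 j in lt_j j_max *.
have le_tau : tau' <= tau := ltW lt_j.
have gap k : tau' <= phi ord0 k < tau -> phi ord0 k = tau'.
  by case/andP => le_k lt_k; apply/le_anti; rewrite le_k andbT; exact: j_max.
have S_gt0 := upper_sum_gt0 c_gt0.
have S'_gt0 := lt_le_trans S_gt0 (upper_sum_le le_tau).
(* minimality of [tau] makes the next coordinate below it inadmissible *)
have c'_lt : ctau q phi tau' * tau' < q.
  have not_ok : ~ tau_ok q phi tau' by move=> /tau_min; rewrite leNgt lt_j.
  have [k [le_k lt_q]] : exists k, tau' <= phi ord0 k /\ ctau q phi tau' * phi ord0 k < q.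
    apply: contra_notP not_ok => no_k; split=> [|k le_k]; first by exists j.
    by rewrite leNgt; apply/negP => lt_q; apply: no_k; exists k.
  by apply: le_lt_trans lt_q; rewrite ler_wpM2l // ctauE invr_ge0 mass_ratio_ge0.
apply: (@le_lt_trans _ _ (ctau q phi tau * tau')).
  by apply: ler_wpM2l; [exact: ltW | exact: j_max].
by move: c'_lt; rewrite !ctau_ltE // (upper_excess_eq le_tau gap).
Qed.

Lemma MLEstar_Delta : MLEstar p q phi = MLE_ext phi.
Proof.
rewrite /MLEstar; set tau := tau_star q phi; set c := ctau q phi tau.
have [ok_tau _] : tau_ok q phi tau /\ _ := tau_starP.
have c_gt0 : 0 < c := ctau_gt0 ok_tau.
have below i : phi ord0 i < tau -> c * phi ord0 i < q := tau_star_below i.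
have sep i : (q <= c * phi ord0 i) = (i \in upper tau).
  rewrite inE; case: (leP tau (phi ord0 i)) => [le_i | lt_i]; first exact: ok_tau.2.
  by apply/negbTE; rewrite -ltNge below.
have g_gt0 : 0 < mass_ratio phi (upper tau) by rewrite -invr_gt0 -ctauE.
have scaleE : mle_scale phi = c^-1.
  by rewrite /c ctauE invrK (mle_scale_max _ _ g_gt0) // => i; rewrite -ctauE sep.
have scale_ge1 : 1 <= mle_scale phi.
  apply: le_trans (le_bigmax _ _ [set: 'I_K]%SET).
  rewrite /mass_ratio cardsT card_ord pq_sum_eq1 divr1.
  by under eq_bigl do rewrite inE; rewrite Dphi.2.
apply/rowP => i; rewrite !mxE (max_idPr scale_ge1) scaleE invrK (mulrC _ c).
case: ltP => [lt_i | le_i].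
  by rewrite (max_idPl _) ?mul0r //; have := below _ lt_i; lra.
by rewrite (max_idPr _) // subr_ge0; exact: ok_tau.2.
Qed.

End Threshold.

End Estimators.

Theorem lemma5 (R : realType) (K : nat) (p q : R) :
  (2 <= K)%N -> 0 < q -> q < p -> p + (K - 1)%N%:R * q = 1 ->
  [/\ {within @Delta R K, continuous (Invmap p q)},
      {within @Delta R K, continuous (InvPmap p q)},
      {within @Delta R K, continuous (InvNmap p q)} &
      {within @Delta R K, continuous (MLEstar p q)}].
Proof.
move=> K_ge2 q_gt0 q_lt_p pqK; have K_gt0 : (0 < K)%N by exact: leq_trans K_ge2.
split.
- exact: continuous_subspaceT (continuous_Invmap p q).
- exact: continuous_subspaceT (continuous_InvPmap p q K_gt0).
- exact: continuous_within_eq (InvNmap_Delta p q K_gt0 q_lt_p pqK)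
    (continuous_InvN_ext p q).
- apply: continuous_within_eq (continuous_MLE_ext p q) => phi; rewrite inE.
  exact: MLEstar_Delta.
Qed.
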